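(* Let $X$ be a proper geodesic metric space equipped with the $C_0$ coarse structure, and let $f:X\to\mathbb{C}$ be a bounded continuous function. Then $f$ is a Higson function (i.e., $f\in C_{h_0}(X)$) if and only if $f$ is uniformly continuous.
   Context: The $C_0$ coarse structure on a metric space $(X,d)$ consists of all sets $E\subset X\times X$ such that for every $\epsilon>0$ there is a compact $K\subset X$ with $d(x,y)<\epsilon$ for all $(x,y)\in E\setminus(K\times K)$; such $E$ are called controlled sets. For a bounded continuous $f:X\to\mathbb{C}$ let $\mathbf{d}f:X\times X\to\mathbb{C}$, $\mathbf{d}f(x,y)=f(x)-f(y)$. $f$ is a Higson function if for every controlled set $E$ the restriction $\mathbf{d}f|_E$ vanishes at infinity (for every $\epsilon>0$ there is a compact $L\subset X\times X$ with $|\mathbf{d}f|<\epsilon$ on $E\setminus L$). $C_{h_0}(X)$ is the set of bounded continuous Higson functions. A map $f$ between metric spaces is uniformly continuous if there is a monotone $\omega:[0,\infty)\to[0,\infty)$ with $\lim_{t\to0}\omega(t)=0$ and $d(f(x),f(x'))\le\omega(d(x,x'))$ for all $x,x'$. *)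

From Stdlib Require Import Reals List.
Open Scope R_scope.

(* Complex numbers as pairs of reals, with the usual modulus. *)
Definition CC : Type := (R * R)%type.
Definition Csub (z w : CC) : CC := (fst z - fst w, snd z - snd w).
Definition Cmod (z : CC) : R := sqrt (fst z ^ 2 + snd z ^ 2).

Definition is_metric {T : Type} (d : T -> T -> R) : Prop :=
  (forall x y, 0 <= d x y) /\
  (forall x y, d x y = 0 <-> x = y) /\
  (forall x y, d x y = d y x) /\
  (forall x y z, d x z <= d x y + d y z).

Definition open_set {T : Type} (d : T -> T -> R) (U : T -> Prop) : Prop :=
  forall x, U x -> exists r, 0 < r /\ forall y, d x y < r -> U y.

Definition compact {T : Type} (d : T -> T -> R) (K : T -> Prop) : Prop :=
  forall (I : Type) (U : I -> T -> Prop),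
    (forall i, open_set d (U i)) ->
    (forall x, K x -> exists i, U i x) ->
    exists l : list I, forall x, K x -> exists i, In i l /\ U i x.

Definition proper_space {T : Type} (d : T -> T -> R) : Prop :=
  forall x r, compact d (fun y => d x y <= r).

Definition geodesic_space {T : Type} (d : T -> T -> R) : Prop :=
  forall x y, exists g : R -> T,
    g 0 = x /\ g (d x y) = y /\
    forall s t, 0 <= s <= d x y -> 0 <= t <= d x y -> d (g s) (g t) = Rabs (s - t).

(* Product metric on T x T (max metric; induces the product topology). *)
Definition dprod {T : Type} (d : T -> T -> R) (p q : T * T) : R :=
  Rmax (d (fst p) (fst q)) (d (snd p) (snd q)).

Definition C0_controlled {T : Type} (d : T -> T -> R) (E : T * T -> Prop) : Prop :=
  forall eps, 0 < eps -> exists K : T -> Prop, compact d K /\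
    forall x y, E (x, y) -> ~ (K x /\ K y) -> d x y < eps.

Definition f_bounded {T : Type} (f : T -> CC) : Prop :=
  exists M, forall x, Cmod (f x) <= M.

Definition f_continuous {T : Type} (d : T -> T -> R) (f : T -> CC) : Prop :=
  forall x eps, 0 < eps -> exists delta, 0 < delta /\
    forall y, d x y < delta -> Cmod (Csub (f x) (f y)) < eps.

(* df restricted to E vanishes at infinity. *)
Definition higson_C0 {T : Type} (d : T -> T -> R) (f : T -> CC) : Prop :=
  forall E, C0_controlled d E ->
    forall eps, 0 < eps -> exists L : T * T -> Prop, compact (dprod d) L /\
      forall x y, E (x, y) -> ~ L (x, y) -> Cmod (Csub (f x) (f y)) < eps.

Definition uniformly_continuous {T : Type} (d : T -> T -> R) (f : T -> CC) : Prop :=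
  exists w : R -> R,
    (forall t, 0 <= t -> 0 <= w t) /\
    (forall s t, 0 <= s -> s <= t -> w s <= w t) /\
    (forall eps, 0 < eps -> exists delta, 0 < delta /\
       forall t, 0 < t < delta -> w t < eps) /\
    (forall x x', Cmod (Csub (f x) (f x')) <= w (d x x')).

(* The argument works in every metric space.  The central compactness tool is [compact_ball_cover]: a
   compact set admits a finite cover by balls chosen from prescribed families,
   with radii bounded below by a common m > 0.  It yields
   - compactness of K x K for the max metric (via the tube lemma), which gives
     "uniformly continuous => Higson": a controlled set lies, off K x K, in a
     thin neighbourhood of the diagonal;
   - a uniform estimate of |f x - f y| for pairs near the diagonal inside a
     compact L of X x X, which gives "Higson => uniformly continuous": if the
     epsilon-delta condition fails, witnessing pairs (x_n, y_n) with
     d x_n y_n < 1/(n+1) form a controlled set, hence lie in a compact L, where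
     the estimate applies.
   Finally an epsilon-delta uniformly continuous bounded function has a
   modulus of continuity, namely t |-> sup { |f x - f y| : d x y <= t }. *)
From Pilot Require Import Defs.
From Stdlib Require Import Reals List Lra Psatz Classical ClassicalEpsilon.
Open Scope R_scope.

Lemma sqrt_sum_squares_triangle a1 a2 b1 b2 :
  sqrt ((a1 + b1) ^ 2 + (a2 + b2) ^ 2) <= sqrt (a1 ^ 2 + a2 ^ 2) + sqrt (b1 ^ 2 + b2 ^ 2).
Proof.
  set (A := a1 ^ 2 + a2 ^ 2). set (B := b1 ^ 2 + b2 ^ 2).
  assert (hA0 : 0 <= A) by (unfold A; nra).
  assert (hB0 : 0 <= B) by (unfold B; nra).
  pose proof (sqrt_pos A) as sA. pose proof (sqrt_pos B) as sB.
  pose proof (sqrt_sqrt A hA0) as hA. pose proof (sqrt_sqrt B hB0) as hB.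
  (* Cauchy-Schwarz, from Lagrange's identity. *)
  assert (cauchy_schwarz : a1 * b1 + a2 * b2 <= sqrt A * sqrt B).
  { rewrite <- sqrt_mult_alt by exact hA0.
    apply Rle_trans with (Rabs (a1 * b1 + a2 * b2)); [apply RRle_abs |].
    rewrite <- sqrt_Rsqr_abs. apply sqrt_le_1_alt. unfold Rsqr, A, B.
    pose proof (pow2_ge_0 (a1 * b2 - a2 * b1)). nra. }
  rewrite <- (sqrt_pow2 (sqrt A + sqrt B)) by lra.
  apply sqrt_le_1_alt.
  replace ((sqrt A + sqrt B) ^ 2)
    with (sqrt A * sqrt A + sqrt B * sqrt B + 2 * (sqrt A * sqrt B)) by ring.
  rewrite hA, hB.
  replace ((a1 + b1) ^ 2 + (a2 + b2) ^ 2) with (A + B + 2 * (a1 * b1 + a2 * b2))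
    by (unfold A, B; ring).
  lra.
Qed.

Lemma Cmod_triangle u v w : Cmod (Csub u w) <= Cmod (Csub u v) + Cmod (Csub v w).
Proof.
  destruct u as [u1 u2], v as [v1 v2], w as [w1 w2]; unfold Cmod, Csub; simpl.
  replace (u1 - w1) with ((u1 - v1) + (v1 - w1)) by ring.
  replace (u2 - w2) with ((u2 - v2) + (v2 - w2)) by ring.
  apply sqrt_sum_squares_triangle.
Qed.

Lemma Cmod_Csub_sym u v : Cmod (Csub u v) = Cmod (Csub v u).
Proof. destruct u as [u1 u2], v as [v1 v2]; unfold Cmod, Csub; simpl; f_equal; ring. Qed.

Lemma Cmod_Csub_le u v : Cmod (Csub u v) <= Cmod u + Cmod v.
Proof.
  assert (Hu : Cmod (Csub u (0, 0)) = Cmod u)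
    by (destruct u; unfold Cmod, Csub; simpl; f_equal; ring).
  assert (Hv : Cmod (Csub (0, 0) v) = Cmod v)
    by (destruct v; unfold Cmod, Csub; simpl; f_equal; ring).
  rewrite <- Hu, <- Hv. apply Cmod_triangle.
Qed.

Lemma finite_positive_lower_bound {A : Type} (g : A -> R) (l : list A) :
  exists m, 0 < m /\ forall a, In a l -> 0 < g a -> m <= g a.
Proof.
  induction l as [| a l [m [hm H]]].
  - exists 1. split; [lra | intros a []].
  - destruct (Rlt_dec 0 (g a)) as [ha | ha].
    + exists (Rmin m (g a)). split; [apply Rmin_glb_lt; auto |].
      intros b [<- | hb] hg; [apply Rmin_r |].
      apply Rle_trans with m; [apply Rmin_l | auto].
    + exists m. split; auto. intros b [<- | hb] hg; [contradiction | auto].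
Qed.

Lemma inv_succ_lt e : 0 < e -> exists N : nat, / INR (S N) < e.
Proof.
  intro he. destruct (archimed_cor1 e he) as [N [h hN]].
  destruct N as [| N]; [lia | exists N; auto].
Qed.

Lemma inv_succ_le n N : (N <= n)%nat -> / INR (S n) <= / INR (S N).
Proof.
  intro hle. apply Rinv_le_contravar; [apply lt_0_INR; lia | apply le_INR; lia].
Qed.

Section BallCovers.
Variables (T : Type) (d : T -> T -> R).
Hypothesis d_refl : forall x, d x x = 0.
Hypothesis d_triangle : forall x y z, d x z <= d x y + d y z.

Lemma open_ball x r : Defs.open_set d (fun y => d x y < r).
Proof.
  intros y hy. exists (r - d x y). split; [lra |].
  intros z hz. pose proof (d_triangle x y z). lra.
Qed.

Lemma finite_set_compact (l : list T) : Defs.compact d (fun z => In z l).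
Proof.
  intros I U _ Hcover. induction l as [| a l IH].
  - exists nil. intros x [].
  - destruct IH as [l' Hl']; [intros x hx; apply Hcover; right; auto |].
    destruct (Hcover a (or_introl eq_refl)) as [i hi].
    exists (i :: l'). intros x [<- | hx].
    + exists i. split; [left |]; auto.
    + destruct (Hl' x hx) as [j [hj hU]]. exists j. split; [right |]; auto.
Qed.

Lemma compact_ball_cover {A : Type} (K : T -> Prop) (P : T -> R -> A -> Prop) :
  Defs.compact d K ->
  (forall x, K x -> exists r a, 0 < r /\ P x r a) ->
  exists (l : list (T * R * A)) m, 0 < m /\
    forall y, K y -> exists x r a, In (x, r, a) l /\ P x r a /\ m <= r /\ d x y < r.
Proof.
  intros HK Hballs.
  pose (ball := fun (c : T * R * A) y =>
    let '(x, r, a) := c in (0 < r /\ P x r a) /\ d x y < r).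
  destruct (HK _ ball) as [l Hl].
  - intros [[x r] a] y [hP hy]. destruct (open_ball x r y hy) as [s [hs Hs]].
    exists s. split; auto. intros z hz. split; auto.
  - intros x Kx. destruct (Hballs x Kx) as [r [a [hr hP]]].
    exists (x, r, a). simpl. rewrite d_refl. auto.
  - destruct (finite_positive_lower_bound (fun c : T * R * A => snd (fst c)) l)
      as [m [hm Hm]].
    exists l, m. split; auto. intros y Ky.
    destruct (Hl y Ky) as [[[x r] a] [hin [[hr hP] hy]]].
    exists x, r, a. repeat split; auto. exact (Hm _ hin hr).
Qed.

End BallCovers.

Lemma dprod_refl {T : Type} (d : T -> T -> R) :
  is_metric d -> forall p, dprod d p p = 0.
Proof.
  intros [_ [Hzero _]] p. unfold dprod.
  rewrite (proj2 (Hzero _ _) eq_refl), (proj2 (Hzero _ _) eq_refl). apply Rmax_left; lra.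
Qed.

Lemma dprod_triangle {T : Type} (d : T -> T -> R) :
  is_metric d -> forall a b c, dprod d a c <= dprod d a b + dprod d b c.
Proof.
  intros [_ [_ [_ Htri]]] a b c. unfold dprod.
  pose proof (Rmax_l (d (fst a) (fst b)) (d (snd a) (snd b))).
  pose proof (Rmax_r (d (fst a) (fst b)) (d (snd a) (snd b))).
  pose proof (Rmax_l (d (fst b) (fst c)) (d (snd b) (snd c))).
  pose proof (Rmax_r (d (fst b) (fst c)) (d (snd b) (snd c))).
  pose proof (Htri (fst a) (fst b) (fst c)). pose proof (Htri (snd a) (snd b) (snd c)).
  apply Rmax_lub; lra.
Qed.

Lemma dprod_lt {T : Type} (d : T -> T -> R) x y x' y' r :
  dprod d (x, y) (x', y') < r <-> d x x' < r /\ d y y' < r.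
Proof.
  unfold dprod; simpl. split.
  - intro h. split; eapply Rle_lt_trans; [apply Rmax_l | exact h | apply Rmax_r | exact h].
  - intros [h1 h2]. apply Rmax_lub_lt; auto.
Qed.

Section ProductCompact.
Variables (T : Type) (d : T -> T -> R).
Hypothesis d_metric : is_metric d.

Let d_refl : forall x, d x x = 0.
Proof. intro x. apply (proj1 (proj2 d_metric)). reflexivity. Qed.
Let d_triangle : forall x y z, d x z <= d x y + d y z.
Proof. exact (proj2 (proj2 (proj2 d_metric))). Qed.

Lemma tube_lemma (K : T -> Prop) (I : Type) (U : I -> T * T -> Prop) :
  Defs.compact d K -> (forall i, Defs.open_set (dprod d) (U i)) ->
  (forall x y, K x -> K y -> exists i, U i (x, y)) ->
  forall a, K a -> exists (ls : list I) r, 0 < r /\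
    forall x y, d a x < r -> K y -> exists i, In i ls /\ U i (x, y).
Proof.
  intros HK HU Hcover a Ka.
  destruct (compact_ball_cover T d d_refl d_triangle K
     (fun y r i => forall x' y', d a x' < r -> d y y' < r -> U i (x', y')) HK)
    as [l [m [hm Hl]]].
  - intros y Ky. destruct (Hcover a y Ka Ky) as [i Hi].
    destruct (HU i (a, y) Hi) as [r [hr Hr]].
    exists r, i. split; auto. intros x' y' h1 h2. apply Hr. apply dprod_lt; auto.
  - exists (map snd l), m. split; auto. intros x y hx Ky.
    destruct (Hl y Ky) as [y0 [r [i [hin [hP [hmr hy]]]]]].
    exists i. split; [exact (in_map snd l _ hin) | apply hP; lra].
Qed.

Lemma square_compact (K : T -> Prop) :
  Defs.compact d K -> Defs.compact (dprod d) (fun p => K (fst p) /\ K (snd p)).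
Proof.
  intros HK I U HU Hcover.
  destruct (compact_ball_cover T d d_refl d_triangle K
     (fun a r ls => forall x y, d a x < r -> K y -> exists i, In i ls /\ U i (x, y)) HK)
    as [l [m [_ Hl]]].
  - intros a Ka.
    destruct (tube_lemma K I U HK HU (fun x y Kx Ky => Hcover (x, y) (conj Kx Ky)) a Ka)
      as [ls [r [hr Hr]]].
    exists r, ls. auto.
  - exists (flat_map snd l). intros [x y] [Kx Ky]; simpl in *.
    destruct (Hl x Kx) as [a [r [ls [hin [hP [_ hx]]]]]].
    destruct (hP x y hx Ky) as [i [hi hU]].
    exists i. split; auto. apply in_flat_map. exists (a, r, ls); auto.
Qed.

End ProductCompact.

Definition eps_delta_uniformly_continuous {T : Type} (d : T -> T -> R) (f : T -> CC) : Prop :=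
  forall eps, 0 < eps -> exists delta, 0 < delta /\
    forall x y, d x y < delta -> Cmod (Csub (f x) (f y)) < eps.

(* Uniformly continuous functions are Higson: a controlled set lies, off a
   compact square K x K, within an arbitrarily thin strip about the diagonal. *)
Lemma uniformly_continuous_higson {T : Type} (d : T -> T -> R) (f : T -> CC) :
  is_metric d -> uniformly_continuous d f -> higson_C0 d f.
Proof.
  intros Hm [w [_ [w_mono [w_small w_modulus]]]] E HE eps heps.
  destruct (w_small eps heps) as [delta [hdelta Hdelta]].
  destruct (HE delta hdelta) as [K [HK HKE]].
  exists (fun p => K (fst p) /\ K (snd p)). split; [exact (square_compact T d Hm K HK) |].
  intros x y hE hL. assert (hxy : d x y < delta) by (apply HKE; auto).
  pose proof (proj1 Hm x y).
  apply Rle_lt_trans with (w (d x y)); auto.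
  apply Rle_lt_trans with (w ((d x y + delta) / 2)); [apply w_mono | apply Hdelta]; lra.
Qed.

Section HigsonImpliesUniform.
Variables (T : Type) (d : T -> T -> R) (f : T -> CC).
Hypothesis d_metric : is_metric d.
Hypothesis f_cont : f_continuous d f.

(* A sequence of pairs whose n-th pair has distance < 1/(n+1) is a controlled
   set: outside the finite (hence compact) set of points of the first N+1
   pairs, all distances are below 1/(N+1). *)
Lemma shrinking_pairs_controlled (p : nat -> T * T) :
  (forall n, d (fst (p n)) (snd (p n)) < / INR (S n)) ->
  C0_controlled d (fun q => exists n, q = p n).
Proof.
  intros Hp e he. destruct (inv_succ_lt e he) as [N hN].
  pose (points := flat_map (fun n => fst (p n) :: snd (p n) :: nil) (seq 0 (S N))).
  exists (fun z => In z points). split.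
  { apply finite_set_compact. }
  intros x y [n hn] hK.
  destruct (Compare_dec.le_lt_dec n N) as [hle | hlt].
  - exfalso; apply hK; split; apply in_flat_map; exists n;
      (split; [apply in_seq; lia | rewrite <- hn; simpl; auto]).
  - pose proof (Hp n) as hpn. rewrite <- hn in hpn. cbn [fst snd] in hpn.
    pose proof (inv_succ_le n N ltac:(lia)). lra.
Qed.

Lemma near_diagonal_local eps :
  0 < eps -> forall a b, exists r, 0 < r /\ forall x y, dprod d (a, b) (x, y) < r ->
    Cmod (Csub (f x) (f y)) < eps \/ r <= d x y.
Proof.
  destruct d_metric as [_ [_ [d_sym d_triangle]]].
  intros heps a b. destruct (f_cont a (eps / 2)) as [delta [hdelta Hdelta]]; [lra |].
  destruct (Rlt_dec (d a b) (delta / 2)) as [hab | hab].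
  - exists (delta / 4). split; [lra |]. intros x y hxy. left.
    apply dprod_lt in hxy as [hx hy]. pose proof (d_triangle a b y).
    pose proof (Hdelta x ltac:(lra)). pose proof (Hdelta y ltac:(lra)).
    pose proof (Cmod_triangle (f x) (f a) (f y)). rewrite (Cmod_Csub_sym (f x) (f a)) in *. lra.
  - exists (d a b / 4). split; [lra |]. intros x y hxy. right.
    apply dprod_lt in hxy as [hx hy].
    pose proof (d_triangle a x b). pose proof (d_triangle x y b). pose proof (d_sym b y). lra.
Qed.

Lemma compact_near_diagonal_uniform (L : T * T -> Prop) eps :
  Defs.compact (dprod d) L -> 0 < eps ->
  exists m, 0 < m /\ forall x y, L (x, y) -> d x y < m -> Cmod (Csub (f x) (f y)) < eps.
Proof.
  intros HL heps.
  destruct (compact_ball_cover _ (dprod d) (dprod_refl d d_metric) (dprod_triangle d d_metric)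
     L (fun c r (_ : unit) => forall x y, dprod d c (x, y) < r ->
          Cmod (Csub (f x) (f y)) < eps \/ r <= d x y) HL)
    as [l [m [hm Hl]]].
  - intros [a b] _. destruct (near_diagonal_local eps heps a b) as [r [hr Hr]].
    exists r, tt. auto.
  - exists m. split; auto. intros x y hL hxy.
    destruct (Hl (x, y) hL) as [c [r [_ [_ [hP [hmr hc]]]]]].
    destruct (hP x y hc); [auto | lra].
Qed.

(* Higson functions are uniformly continuous: otherwise pairs witnessing the
   failure form a controlled set, so they lie in a compact L, contradicting
   [compact_near_diagonal_uniform]. *)
Lemma higson_eps_delta_uniformly_continuous :
  higson_C0 d f -> eps_delta_uniformly_continuous d f.
Proof.
  intros Hhig eps heps. apply NNPP; intro Hfail.
  assert (Hbad : forall n : nat, exists q : T * T, d (fst q) (snd q) < / INR (S n) /\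
            eps <= Cmod (Csub (f (fst q)) (f (snd q)))).
  { intro n. apply NNPP; intro Hn. apply Hfail. exists (/ INR (S n)). split.
    - apply Rinv_0_lt_compat, lt_0_INR; lia.
    - intros x y hxy. apply Rnot_le_lt; intro hle. apply Hn. exists (x, y); auto. }
  pose (p := fun n => proj1_sig (constructive_indefinite_description _ (Hbad n))).
  assert (Hp : forall n, d (fst (p n)) (snd (p n)) < / INR (S n) /\
            eps <= Cmod (Csub (f (fst (p n))) (f (snd (p n))))).
  { intro n. exact (proj2_sig (constructive_indefinite_description _ (Hbad n))). }
  destruct (Hhig _ (shrinking_pairs_controlled p (fun n => proj1 (Hp n))) eps heps)
    as [L [HL HLE]].
  assert (p_in_L : forall n, L (p n)).
  { intro n. apply NNPP; intro hn. destruct (Hp n) as [_ h2].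
    destruct (p n) as [x y] eqn:Epn. simpl in h2.
    pose proof (HLE x y (ex_intro _ n (eq_sym Epn)) hn). lra. }
  destruct (compact_near_diagonal_uniform L eps HL heps) as [m [hm Hm]].
  destruct (inv_succ_lt m hm) as [N hN]. destruct (Hp N) as [h1 h2].
  pose proof (p_in_L N) as hL. destruct (p N) as [x y]; simpl in *.
  pose proof (Hm x y hL ltac:(lra)). lra.
Qed.

End HigsonImpliesUniform.

(* A bounded epsilon-delta uniformly continuous function has a modulus of
   continuity: w t = sup { |f x - f y| : d x y <= t } (together with 0). *)
Lemma eps_delta_modulus {T : Type} (d : T -> T -> R) (f : T -> CC) :
  f_bounded f -> eps_delta_uniformly_continuous d f -> uniformly_continuous d f.
Proof.
  intros [M HM] Hunif.
  pose (S := fun t v => v = 0 \/ exists x y, d x y <= t /\ v = Cmod (Csub (f x) (f y))).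
  assert (S_bounded : forall t, bound (S t)).
  { intro t. exists (Rmax (M + M) 0). intros v [-> | [x [y [_ ->]]]]; [apply Rmax_r |].
    apply Rle_trans with (M + M); [| apply Rmax_l].
    pose proof (Cmod_Csub_le (f x) (f y)). pose proof (HM x). pose proof (HM y). lra. }
  pose (lub t := completeness (S t) (S_bounded t) (ex_intro _ 0 (or_introl eq_refl))).
  pose (w t := proj1_sig (lub t)).
  assert (Hw : forall t, is_lub (S t) (w t)) by (intro t; exact (proj2_sig (lub t))).
  exists w. split; [| split; [| split]].
  - intros t _. apply (proj1 (Hw t)). left; auto.
  - intros s t hs hst. apply (proj2 (Hw s)). intros v [hv | [x [y [h1 h2]]]];
      apply (proj1 (Hw t)); [left; auto | right; exists x, y; split; [lra | auto]].
  - intros eps heps. destruct (Hunif (eps / 2)) as [delta [hdelta Hdelta]]; [lra |].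
    exists delta. split; auto. intros t [ht1 ht2].
    apply Rle_lt_trans with (eps / 2); [| lra]. apply (proj2 (Hw t)).
    intros v [-> | [x [y [h1 ->]]]]; [lra | left; apply Hdelta; lra].
  - intros x x'. apply (proj1 (Hw _)). right. exists x, x'. split; [lra | auto].
Qed.

Theorem theorem3p4 (X : Type) (d : X -> X -> R) (f : X -> CC)
  (Hmetric : is_metric d) (Hproper : proper_space d) (Hgeod : geodesic_space d)
  (Hbdd : f_bounded f) (Hcont : f_continuous d f) :
  higson_C0 d f <-> uniformly_continuous d f.
Proof.
  split.
  - intro Hhig. apply eps_delta_modulus; [exact Hbdd |].
    exact (higson_eps_delta_uniformly_continuous X d f Hmetric Hcont Hhig).
  - exact (uniformly_continuous_higson d f Hmetric).
Qed.
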